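(* Let $(X,\tau)$ be a $\mathbb{B}$-topological space. (i) $(X,\tau)$ is $R_0$ if and only if both topological spaces $(X,\tau[tt])$ and $(X,\tau[ff])$ are $R_0$. (ii) $(X,\tau)$ is $T_1$ if and only if the topological space $(X,\tau[tt]\vee\tau[ff])$ is $T_0$ and both $(X,\tau[tt])$ and $(X,\tau[ff])$ are $R_0$.
   Context: $\mathbb{B}=\{0,1,tt,ff\}$ is the four-element Boolean algebra with bottom $0$, top $1$, and $tt,ff$ incomparable complements; $a\to b=\neg a\vee b$. A $\mathbb{B}$-topology on $X$ is $\tau\subseteq\mathbb{B}^X$ containing all constant maps and closed under arbitrary pointwise joins and finite pointwise meets; $\tau[b]=\{\lambda[b]:\lambda\in\tau\}$ with $\lambda[b]=\{x:\lambda(x)\ge b\}$, for $b\in\{tt,ff\}$, are topologies; $\tau[tt]\vee\tau[ff]$ is the topology generated by their union. Specialization $\mathbb{B}$-order: $\Omega(\tau)(x,y)=\bigwedge_{\lambda\in\tau}(\lambda(x)\to\lambda(y))$. $(X,\tau)$ is $R_0$ if $\Omega(\tau)(x,y)=\Omega(\tau)(y,x)$ for all $x,y$; $T_0$ if $\Omega(\tau)(x,y)=1=\Omega(\tau)(y,x)$ implies $x=y$; $T_1$ if both $T_0$ and $R_0$. A topological space is $R_0$ if every open set containing a point contains the closure of that point's singleton. *)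

From Stdlib Require Import Bool ClassicalEpsilon.

(** The four-element Boolean algebra B = {0,1,tt,ff}, modelled as bool * bool
    with the componentwise order: 0 = (false,false), 1 = (true,true),
    tt = (true,false), ff = (false,true). *)
Definition B : Type := (bool * bool)%type.
Definition B0 : B := (false, false).
Definition B1 : B := (true, true).
Definition Btt : B := (true, false).
Definition Bff : B := (false, true).

Definition Ble (a b : B) : bool := implb (fst a) (fst b) && implb (snd a) (snd b).
Definition Bmeet (a b : B) : B := (fst a && fst b, snd a && snd b).
Definition Bjoin (a b : B) : B := (fst a || fst b, snd a || snd b).
Definition Bneg (a : B) : B := (negb (fst a), negb (snd a)).
Definition Bimpl (a b : B) : B := Bjoin (Bneg a) b.

Definition decide (P : Prop) : bool :=
  if excluded_middle_informative P then true else false.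

Definition Bsup (S : B -> Prop) : B :=
  (decide (exists a, S a /\ fst a = true), decide (exists a, S a /\ snd a = true)).
Definition Binf (S : B -> Prop) : B :=
  (decide (forall a, S a -> fst a = true), decide (forall a, S a -> snd a = true)).

Definition is_Btopology {X : Type} (tau : (X -> B) -> Prop) : Prop :=
  (forall c : B, tau (fun _ => c)) /\
  (forall F : (X -> B) -> Prop, (forall l, F l -> tau l) ->
     tau (fun x => Bsup (fun c => exists l, F l /\ c = l x))) /\
  (forall l m, tau l -> tau m -> tau (fun x => Bmeet (l x) (m x))).

(** tau[b] = { lambda[b] : lambda in tau }, lambda[b] = { x : b <= lambda x }. *)
Definition cut {X : Type} (tau : (X -> B) -> Prop) (b : B) (U : X -> Prop) : Prop :=
  exists l, tau l /\ forall x, U x <-> Ble b (l x) = true.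

Definition Omega {X : Type} (tau : (X -> B) -> Prop) (x y : X) : B :=
  Binf (fun c => exists l, tau l /\ c = Bimpl (l x) (l y)).

Definition BR0 {X : Type} (tau : (X -> B) -> Prop) : Prop :=
  forall x y, Omega tau x y = Omega tau y x.
Definition BT0 {X : Type} (tau : (X -> B) -> Prop) : Prop :=
  forall x y, Omega tau x y = B1 -> Omega tau y x = B1 -> x = y.
Definition BT1 {X : Type} (tau : (X -> B) -> Prop) : Prop :=
  BT0 tau /\ BR0 tau.

Definition is_topology {X : Type} (T : (X -> Prop) -> Prop) : Prop :=
  (forall F : (X -> Prop) -> Prop, (forall V, F V -> T V) ->
     forall U, (forall x, U x <-> exists V, F V /\ V x) -> T U) /\
  (forall U V W, T U -> T V -> (forall x, W x <-> U x /\ V x) -> T W) /\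
  T (fun _ => True).

Definition generated {X : Type} (S : (X -> Prop) -> Prop) (U : X -> Prop) : Prop :=
  forall T, is_topology T -> (forall V, S V -> T V) -> T U.

Definition sup_top {X : Type} (T1 T2 : (X -> Prop) -> Prop) : (X -> Prop) -> Prop :=
  generated (fun V => T1 V \/ T2 V).

(** Closure of a singleton {x}: y is in it iff every open set containing y contains x. *)
Definition closure1 {X : Type} (T : (X -> Prop) -> Prop) (x y : X) : Prop :=
  forall V, T V -> V y -> V x.

Definition R0 {X : Type} (T : (X -> Prop) -> Prop) : Prop :=
  forall U x, T U -> U x -> forall y, closure1 T x y -> U y.

Definition T0 {X : Type} (T : (X -> Prop) -> Prop) : Prop :=
  forall x y, (forall U, T U -> (U x <-> U y)) -> x = y.

From Stdlib Require Import Bool ClassicalEpsilon.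

(* B = bool * bool, and the cuts at tt and ff read off the two coordinates.
   Coordinatewise, Omega(tau)(x, y) is an infimum of Boolean implications
   lambda(x) -> lambda(y), i.e. the truth value of "y is in the closure of {x}"
   in tau[tt] resp. tau[ff].  So Omega is symmetric iff both specialization
   preorders are, which is R0 for both cut topologies; and Omega(x, y) = 1 =
   Omega(y, x) says x and y are indistinguishable in both cut topologies, i.e.
   in their join.  None of the B-topology axioms is needed. *)

Lemma decide_spec (P : Prop) : decide P = true <-> P.
Proof.
  unfold decide; destruct (excluded_middle_informative P); split; intuition congruence.
Qed.

Lemma decide_ext (P Q : Prop) : (P <-> Q) -> decide P = decide Q.
Proof.
  intros HPQ; unfold decide.
  destruct (excluded_middle_informative P), (excluded_middle_informative Q); tauto.
Qed.

Lemma decide_inj (P Q : Prop) : decide P = decide Q -> (P <-> Q).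
Proof.
  intros HPQ; rewrite <- (decide_spec P), <- (decide_spec Q), HPQ; reflexivity.
Qed.

Lemma Ble_Btt (c : B) : Ble Btt c = fst c.
Proof. destruct c as [[] []]; reflexivity. Qed.

Lemma Ble_Bff (c : B) : Ble Bff c = snd c.
Proof. destruct c as [[] []]; reflexivity. Qed.

Lemma fst_Bimpl (a b : B) : fst (Bimpl a b) = implb (fst a) (fst b).
Proof. destruct a as [[] []], b as [[] []]; reflexivity. Qed.

Lemma snd_Bimpl (a b : B) : snd (Bimpl a b) = implb (snd a) (snd b).
Proof. destruct a as [[] []], b as [[] []]; reflexivity. Qed.

Section CoordinateSpecialization.

Variables (X : Type) (tau : (X -> B) -> Prop) (b : B) (p : B -> bool).
Hypothesis Ble_b : forall c, Ble b c = p c.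
Hypothesis p_Bimpl : forall c d, p (Bimpl c d) = implb (p c) (p d).

Lemma closure1_cut (x y : X) :
  closure1 (cut tau b) y x <-> forall l, tau l -> p (l x) = true -> p (l y) = true.
Proof.
  split.
  - intros Hxy l Hl.
    apply (Hxy (fun z => p (l z) = true)).
    exists l; split; [exact Hl | intros z; rewrite Ble_b; reflexivity].
  - intros Hxy U [l [Hl HU]] Ux.
    apply HU; rewrite Ble_b; apply (Hxy l Hl).
    rewrite <- Ble_b; apply HU, Ux.
Qed.

Lemma Binf_impl_spec (x y : X) :
  (forall c, (exists l, tau l /\ c = Bimpl (l x) (l y)) -> p c = true) <->
  closure1 (cut tau b) y x.
Proof.
  rewrite closure1_cut; split.
  - intros Hinf l Hl; rewrite <- implb_true_iff, <- p_Bimpl.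
    apply Hinf; exists l; auto.
  - intros Hxy c [l [Hl ->]]; rewrite p_Bimpl, implb_true_iff; apply Hxy, Hl.
Qed.

End CoordinateSpecialization.

Lemma Omega_closure1 {X : Type} (tau : (X -> B) -> Prop) (x y : X) :
  Omega tau x y =
  (decide (closure1 (cut tau Btt) y x), decide (closure1 (cut tau Bff) y x)).
Proof.
  unfold Omega, Binf; f_equal; apply decide_ext, Binf_impl_spec.
  - exact Ble_Btt.
  - exact fst_Bimpl.
  - exact Ble_Bff.
  - exact snd_Bimpl.
Qed.

Lemma Omega_eq1 {X : Type} (tau : (X -> B) -> Prop) (x y : X) :
  Omega tau x y = B1 <-> closure1 (cut tau Btt) y x /\ closure1 (cut tau Bff) y x.
Proof.
  rewrite Omega_closure1; unfold B1; split.
  - intros Heq; injection Heq; rewrite !decide_spec; auto.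
  - intros [Htt Hff]; apply decide_spec in Htt, Hff; rewrite Htt, Hff; reflexivity.
Qed.

Lemma R0_closure1_sym {X : Type} (T : (X -> Prop) -> Prop) :
  R0 T <-> forall x y, closure1 T x y <-> closure1 T y x.
Proof.
  unfold R0, closure1; split.
  - intros HR0 x y; split; intros Hxy U HU Uz; eapply HR0; eauto.
  - intros Hsym U x HU Ux y Hxy; exact (proj1 (Hsym x y) Hxy U HU Ux).
Qed.

Lemma BR0_R0_cut {X : Type} (tau : (X -> B) -> Prop) :
  BR0 tau <-> R0 (cut tau Btt) /\ R0 (cut tau Bff).
Proof.
  unfold BR0; rewrite !R0_closure1_sym; split.
  - intros Hsym; split; intros x y; specialize (Hsym y x);
      rewrite !Omega_closure1 in Hsym; injection Hsym as Htt Hff.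
    + exact (decide_inj _ _ Htt).
    + exact (decide_inj _ _ Hff).
  - intros [Htt Hff] x y; rewrite !Omega_closure1; f_equal; apply decide_ext; auto.
Qed.

Lemma indistinguishable_closure1 {X : Type} (T : (X -> Prop) -> Prop) (x y : X) :
  (forall U, T U -> (U x <-> U y)) <-> closure1 T x y /\ closure1 T y x.
Proof.
  unfold closure1; split.
  - intros Hind; split; intros U HU; apply (Hind U HU).
  - intros [Hxy Hyx] U HU; split; [apply Hyx | apply Hxy]; exact HU.
Qed.

Lemma indistinguishable_topology {X : Type} (x y : X) :
  is_topology (fun V => V x <-> V y).
Proof.
  split; [|split].
  - intros F HF U HU; rewrite !HU.
    split; intros [V [FV Vz]]; exists V; split; auto; apply (HF V FV); auto.
  - intros U V W HU HV HW; rewrite !HW; tauto.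
  - tauto.
Qed.

Lemma sup_top_indistinguishable {X : Type} (T1 T2 : (X -> Prop) -> Prop) (x y : X) :
  (forall U, sup_top T1 T2 U -> (U x <-> U y)) <->
  (forall U, T1 U -> (U x <-> U y)) /\ (forall U, T2 U -> (U x <-> U y)).
Proof.
  split.
  - intros Hind; split; intros U HU; apply Hind; intros T _ HT; apply HT; auto.
  - intros [H1 H2] U HU.
    apply (HU _ (indistinguishable_topology x y)).
    intros V [HV | HV]; auto.
Qed.

Lemma BT0_T0_sup_cut {X : Type} (tau : (X -> B) -> Prop) :
  BT0 tau <-> T0 (sup_top (cut tau Btt) (cut tau Bff)).
Proof.
  unfold BT0, T0.
  setoid_rewrite Omega_eq1.
  setoid_rewrite sup_top_indistinguishable.
  setoid_rewrite indistinguishable_closure1.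
  split; intros HT0 x y; specialize (HT0 x y); tauto.
Qed.

Theorem mainTheorem13 (X : Type) (tau : (X -> B) -> Prop) :
  is_Btopology tau ->
  (BR0 tau <-> R0 (cut tau Btt) /\ R0 (cut tau Bff)) /\
  (BT1 tau <-> T0 (sup_top (cut tau Btt) (cut tau Bff)) /\
                R0 (cut tau Btt) /\ R0 (cut tau Bff)).
Proof.
  intros _; split.
  - apply BR0_R0_cut.
  - unfold BT1; rewrite BT0_T0_sup_cut, BR0_R0_cut; tauto.
Qed.
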